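(* Let $M$ be the set consisting of the empty composition together with all Fibonacci compositions of multiples of $3$ that start with a part $1$; it is a free monoid under concatenation. Give a composition of $3n$ weight $n$. Then the number of primes of $M$ of weight $n$ is the coefficient of $x^n$ in $\dfrac{2x}{1-2x-x^2}$ (i.e. $a_0=0$, $a_1=2$, $a_n=2a_{n-1}+a_{n-2}$ for $n\ge2$), and consequently $$1+\sum_{n\ge1}F_{3n}x^n=1+\frac{2x}{1-4x-x^2}=\Bigl(1-\frac{2x}{1-2x-x^2}\Bigr)^{-1}.$$
   Context: A Fibonacci composition of $N$ is a sequence of parts each equal to $1$ or $2$ with sum $N$. A free monoid is one in which every element factors uniquely as a product of primes (nonempty elements not expressible as a product of two nonempty elements of the monoid). Fibonacci numbers: $F_0=0$, $F_1=1$, $F_n=F_{n-1}+F_{n-2}$. *)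

From mathcomp Require Import all_boot.
Set Implicit Arguments. Unset Strict Implicit. Unset Printing Implicit Defensive.

Fixpoint fib (n : nat) : nat :=
  match n with
  | 0 => 0
  | 1 => 1
  | (m.+1 as k).+1 => fib k + fib m
  end.

Definition fib_comp (c : seq nat) : bool := all (fun p => (p == 1) || (p == 2)) c.

Definition inM (c : seq nat) : bool :=
  (c == [::]) || [&& fib_comp c, 3 %| sumn c & head 0 c == 1].

Definition weight (c : seq nat) : nat := sumn c %/ 3.

Definition Mprime (c : seq nat) : Prop :=
  inM c /\ c <> [::] /\
  ~ (exists u v, [/\ inM u, inM v, u <> [::], v <> [::] & c = u ++ v]).

(* a_n = coefficient of x^n in 2x/(1-2x-x^2). *)
Fixpoint acoef (n : nat) : nat :=
  match n with
  | 0 => 0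
  | 1 => 2
  | (m.+1 as k).+1 => 2 * acoef k + acoef m
  end.

(* g_n = coefficient of x^n in 2x/(1-4x-x^2). *)
Fixpoint gcoef (n : nat) : nat :=
  match n with
  | 0 => 0
  | 1 => 2
  | (m.+1 as k).+1 => 4 * gcoef k + gcoef m
  end.

Definition ccoef (n : nat) : nat := if n == 0 then 1 else fib (3 * n).

From mathcomp Require Import all_boot zify.
From Stdlib Require Import Classical.
Set Implicit Arguments. Unset Strict Implicit.

(* An element c of M is prime iff it admits no "cut": no splitting
   c = x ++ y with x nonempty, 3 | sumn x and y starting with a part 1
   (MprimeP); indeed the two halves of such a cut lie in M again (inM_cut).  They are unique because
   primes are prefix-free in the relevant sense: if a prime f were a proper
   prefix of a prime g whose remainder starts with 1 (as every product of
   primes does), then f would be a cut of g (prime_prefix).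

   A composition 1 :: w is prime iff w is a Fibonacci composition
   accepted by the three-state automaton cut_free, which tracks the running
   sum modulo 3 and rejects a part 1 read at a multiple of 3 (Mprime_cons).
   Enumerating all Fibonacci compositions (comps) and counting accepted ones
   from each state gives linear recurrences (ncut_free_SS) whose solution is
   a_n (ncut_free_count).

   Series.  F_{3n} and the coefficients of A*C both satisfy the recurrence
   of 2x/(1-4x-x^2), so they equal g_n by a uniqueness lemma for second
   order recurrences (rec2_unique). *)

Lemma fib_comp_cat u v : fib_comp (u ++ v) = fib_comp u && fib_comp v.
Proof. exact: all_cat. Qed.

Lemma inM_cons1 w : inM (1 :: w) = fib_comp w && (3 %| 1 + sumn w).
Proof. by rewrite /inM /= andbT. Qed.

Lemma inM_nonnil c : inM c -> c <> [::] -> exists w, c = 1 :: w.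
Proof.
by case: c => [//|p w] /orP[//|/and3P[_ _ /eqP /= ->]] _; exists w.
Qed.

Lemma inM_sumn c : inM c -> 3 %| sumn c.
Proof. by case/orP => [/eqP -> // | /and3P[]]. Qed.

Lemma inM_cat u v : inM u -> inM v -> inM (u ++ v).
Proof.
case: u => [//|a u] Hu; case: v => [|b v] Hv; first by rewrite cats0.
case/orP: Hu => [//|/and3P[Fu Hu3 Hu1]]; case/orP: Hv => [//|/and3P[Fv Hv3 _]].
by rewrite /inM fib_comp_cat Fu Fv sumn_cat dvdn_add.
Qed.

Lemma inM_cut x y : inM (x ++ y) -> 3 %| sumn x -> head 0 y = 1 ->
  inM x /\ inM y.
Proof.
case: y => [//|b y] /orP[/eqP|]; first by case: x.
rewrite fib_comp_cat sumn_cat => /and3P[/andP[Fx Fy] Hs Hh] Hx3 /= Hb.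
split.
- case: x Fx Hx3 Hh {Hs} => [//|a x] Fx Hx3 Hh.
  by apply/orP; right; apply/and3P.
- apply/orP; right; apply/and3P; split => //; last by rewrite Hb.
  by rewrite -(dvdn_addr _ Hx3).
Qed.

Lemma MprimeP c : Mprime c <->
  [/\ inM c, c <> [::] &
      forall x y, c = x ++ y -> x <> [::] -> 3 %| sumn x -> head 0 y != 1].
Proof.
split.
- case=> Hc [Hc0 Hirr]; split => // x y Exy Hx0 Hx3; apply/eqP => Hy1.
  have [Hx Hy] : inM x /\ inM y by apply: inM_cut; rewrite // -Exy.
  apply: Hirr; exists x, y; split => // Ey.
  by rewrite Ey in Hy1.
- case=> Hc Hc0 Hcut; split => //; split => // -[u [v [Hu Hv Hu0 Hv0 Euv]]].
  have [w Ew] := inM_nonnil Hv Hv0.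
  by move: (Hcut u v Euv Hu0 (inM_sumn Hu)); rewrite Ew.
Qed.

Lemma Mprime_nonnil c : Mprime c -> exists w, c = 1 :: w.
Proof. by case/MprimeP => Hc Hc0 _; apply: inM_nonnil. Qed.

Lemma factorization_exists c : inM c ->
  exists fs : seq (seq nat), (forall f, f \in fs -> Mprime f) /\ flatten fs = c.
Proof.
move: {2}(size c) (leqnn (size c)) => n; elim: n c => [|n IH] c Hsize Hc.
  by exists [::]; move: Hsize; rewrite leqn0 => /nilP ->.
have [Hp | Hnp] := classic (Mprime c).
  by exists [:: c]; split=> [f /[!inE] /eqP ->|]; rewrite /= ?cats0.
have [-> | Hc0] := classic (c = [::]); first by exists [::].
have [u [v [Hu Hv Hu0 Hv0 Euv]]] :
    exists u v, [/\ inM u, inM v, u <> [::], v <> [::] & c = u ++ v].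
  by apply: NNPP => Hirr; apply: Hnp.
have Hsu : 0 < size u by rewrite lt0n size_eq0; apply/eqP.
have Hsv : 0 < size v by rewrite lt0n size_eq0; apply/eqP.
have Hsuv : size u + size v <= n.+1 by rewrite -size_cat -Euv.
have [fs [Hfs Efs]] : exists fs : seq (seq nat),
    (forall f, f \in fs -> Mprime f) /\ flatten fs = u.
  by apply: IH Hu; lia.
have [gs [Hgs Egs]] : exists gs : seq (seq nat),
    (forall g, g \in gs -> Mprime g) /\ flatten gs = v.
  by apply: IH Hv; lia.
exists (fs ++ gs); split; last by rewrite Euv -Efs -Egs flatten_cat.
by move=> f; rewrite mem_cat => /orP[/Hfs|/Hgs].
Qed.

Lemma head_flatten_primes fs :
  (forall f, f \in fs -> Mprime f) -> head 1 (flatten fs) = 1.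
Proof.
case: fs => [//|f fs] Hfs.
by have [w ->] := Mprime_nonnil (Hfs f (mem_head f fs)).
Qed.

(* If f ++ X = g ++ Y with f, g prime, X empty or starting with 1 and f not
   longer than g, then f = g: otherwise f would be a cut of g. *)
Lemma prime_prefix f g X Y : Mprime f -> Mprime g -> head 1 X = 1 ->
  f ++ X = g ++ Y -> size f <= size g -> f = g.
Proof.
move=> Pf Pg HX E; rewrite leq_eqVlt => /orP[/eqP Hs | Hlt].
  by move/eqP: E; rewrite eqseq_cat // => /andP[/eqP].
have Hk : 0 < size g - size f by rewrite subn_gt0.
have Hw1 : head 0 (take (size g - size f) X) = 1.
  case: X HX E => [_|x X /= ->] E.
    by move/(congr1 size): E; rewrite cats0 size_cat; lia.
  by case: (size g - size f) Hk.
have Eg : g = f ++ take (size g - size f) X.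
  move/(congr1 (take (size g))): E.
  by rewrite [RHS]take_size_cat // take_cat ltnNge (ltnW Hlt) /= => ->.
case/MprimeP: (Pf) => Hf Hf0 _.
case/MprimeP: Pg => _ _ /(_ f _ Eg Hf0).
by rewrite Hw1 (inM_sumn Hf) => /(_ isT).
Qed.

Lemma factorization_unique fs gs :
  (forall f, f \in fs -> Mprime f) -> (forall g, g \in gs -> Mprime g) ->
  flatten fs = flatten gs -> fs = gs.
Proof.
elim: fs gs => [|f fs IH] [|g gs] //= Hfs Hgs.
- by have [w ->] := Mprime_nonnil (Hgs g (mem_head g gs)).
- by have [w ->] := Mprime_nonnil (Hfs f (mem_head f fs)).
have Pf := Hfs f (mem_head f fs); have Pg := Hgs g (mem_head g gs).
have Hfs' : forall h, h \in fs -> Mprime h.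
  by move=> h Hh; apply: Hfs; rewrite inE Hh orbT.
have Hgs' : forall h, h \in gs -> Mprime h.
  by move=> h Hh; apply: Hgs; rewrite inE Hh orbT.
move=> E; have Efg : f = g.
  case: (leqP (size f) (size g)) => [le | /ltnW le].
  - exact: prime_prefix Pf Pg (head_flatten_primes Hfs') E le.
  - exact/esym/(prime_prefix Pg Pf (head_flatten_primes Hgs') (esym E) le).
move: E; rewrite Efg => /eqP; rewrite eqseq_cat // => /andP[_ /eqP E].
by rewrite (IH gs Hfs' Hgs' E).
Qed.

(* cut_free s w: reading w after a prefix of sum s, the total sum is a
   multiple of 3 and no part 1 is read while the running sum is one. *)
Fixpoint cut_free (s : nat) (w : seq nat) : bool :=
  if w is p :: w' then (~~ (3 %| s) || (p != 1)) && cut_free (s + p) w'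
  else 3 %| s.

Lemma cut_freeP s w : cut_free s w <->
  3 %| s + sumn w /\
  forall x y, w = x ++ y -> 3 %| s + sumn x -> head 0 y != 1.
Proof.
elim: w s => [|p w IH] s /=.
  rewrite addn0; split=> [H|[]//]; split=> // [[|??] [|??]] //.
split.
- case/andP=> Hp /IH[Hsum Hcut].
  split=> [|[|q x] y /= Ew]; first by rewrite addnA.
    by rewrite addn0 -Ew => H3; rewrite H3 in Hp.
  by case: Ew => <- Ew; rewrite addnA; apply: Hcut.
- case=> Hsum Hcut; apply/andP; split.
    have := Hcut [::] (p :: w) erefl; rewrite addn0 /=.
    by case: (3 %| s) => // /(_ isT).
  apply/IH; split=> [|x y Ew]; first by rewrite -addnA.
  by rewrite -addnA; apply: (Hcut (p :: x)); rewrite Ew.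
Qed.

Lemma Mprime_cons w : Mprime (1 :: w) <-> fib_comp w /\ cut_free 1 w.
Proof.
split.
- case/MprimeP; rewrite inM_cons1 => /andP[Fw H3] _ Hcut.
  split=> //; apply/cut_freeP; split=> // x y Ew; apply: (Hcut (1 :: x)) => //.
  by rewrite Ew.
- case=> Fw /cut_freeP[H3 Hcut]; apply/MprimeP; split=> //.
    by rewrite inM_cons1 Fw.
  by move=> [//|q x] y [<- Ew] _; apply: Hcut.
Qed.

Fixpoint comps (m : nat) : seq (seq nat) :=
  match m with
  | 0 => [:: [::]]
  | 1 => [:: [:: 1]]
  | (k.+1 as m').+1 => map (cons 1) (comps m') ++ map (cons 2) (comps k)
  end.

Lemma comps_SS m :
  comps m.+2 = map (cons 1) (comps m.+1) ++ map (cons 2) (comps m).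
Proof. by []. Qed.

Lemma mem_map_cons (q p : nat) (l : seq (seq nat)) w :
  (p :: w \in map (cons q) l) = (p == q) && (w \in l).
Proof.
by apply/mapP/andP => [[w' Hw' [-> ->]] | [/eqP -> Hw]] //; exists w.
Qed.

Lemma nil_map_cons (q : nat) (l : seq (seq nat)) :
  ([::] \in map (cons q) l) = false.
Proof. by apply/mapP => -[]. Qed.

Lemma mem_comps m w : (w \in comps m) = fib_comp w && (sumn w == m).
Proof.
elim: w m => [|p w IH] [|[|m]] //.
- by rewrite comps_SS mem_cat !nil_map_cons.
- rewrite /fib_comp /=.
  by case: p => [|[|[|p]]] //=; rewrite inE ?add1n ?add2n andbF.
- have -> : comps 1 = map (cons 1) (comps 0) by [].
  rewrite mem_map_cons IH /fib_comp /=.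
  by case: p => [|[|[|p]]] //=; rewrite ?andbF.
- rewrite comps_SS mem_cat !mem_map_cons !IH /fib_comp /= -/(fib_comp w).
  by case: p => [|[|[|p]]]; rewrite ?andbF ?orbF ?add1n ?add2n ?eqSS.
Qed.

Lemma uniq_comps m : uniq (comps m).
Proof.
suff: uniq (comps m) && uniq (comps m.+1) by case/andP.
elim: m => [//|m /andP[Um Um1]]; rewrite Um1 comps_SS.
have inj_cons q : injective (cons q : seq nat -> seq nat) by move=> ? ? [].
rewrite cat_uniq !map_inj_uniq // Um Um1 andbT /=.
by apply/hasPn => _ /mapP[w _ ->]; rewrite mem_map_cons.
Qed.

Lemma cut_free_add3 s w : cut_free (s + 3) w = cut_free s w.
Proof.
elim: w s => [|p w IH] s /=; first by rewrite dvdn_addl.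
by rewrite dvdn_addl // addnAC IH.
Qed.

Definition ncut_free (s m : nat) : nat := count (cut_free s) (comps m).

Lemma ncut_free_add3 s m : ncut_free (s + 3) m = ncut_free s m.
Proof. by apply: eq_count => w; rewrite cut_free_add3. Qed.

(* Splitting on the first part: a part 1 is forbidden at a multiple of 3. *)
Lemma ncut_free_SS s m :
  ncut_free s m.+2 = ~~ (3 %| s) * ncut_free (s + 1) m.+1 + ncut_free (s + 2) m.
Proof.
rewrite /ncut_free comps_SS count_cat !count_map; congr (_ + _).
  have [H3 | H3] := boolP (3 %| s); rewrite /= ?mul0n ?mul1n.
    by rewrite (@eq_count _ _ pred0) ?count_pred0 // => w /=; rewrite H3.
  by apply: eq_count => w /=; rewrite H3.
by apply: eq_count => w /=; rewrite orbT.
Qed.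

(* b_n = 1 + a_0 + ... + a_(n-1), the number of accepted compositions of 3n
   from running sum 0. *)
Fixpoint bcoef (n : nat) : nat := if n is m.+1 then bcoef m + acoef m else 1.

Lemma acoef_bcoef n : acoef n.+1 = bcoef n.+1 + bcoef n.
Proof.
elim: n => [//|n IH].
have Ea : acoef n.+2 = 2 * acoef n.+1 + acoef n by [].
have Eb : bcoef n.+2 = bcoef n.+1 + acoef n.+1 by [].
have Eb' : bcoef n.+1 = bcoef n + acoef n by [].
lia.
Qed.

Lemma ncut_free_count n : [/\ ncut_free 0 (3 * n) = bcoef n,
  ncut_free 2 (3 * n).+1 = bcoef n.+1 & ncut_free 1 (3 * n).+2 = acoef n.+1].
Proof.
elim: n => [|n [T0 T2 T1]]; first by [].
have -> : 3 * n.+1 = (3 * n).+3 by rewrite mulnS.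
have U0 : ncut_free 0 (3 * n).+3 = bcoef n.+1 by rewrite ncut_free_SS T2.
have U2 : ncut_free 2 (3 * n).+4 = bcoef n.+2.
  by rewrite ncut_free_SS (ncut_free_add3 0) (ncut_free_add3 1) U0 T1 mul1n.
have U1 : ncut_free 1 (3 * n).+4.+1 = acoef n.+2.
  by rewrite ncut_free_SS (ncut_free_add3 0) U2 U0 mul1n acoef_bcoef.
by split.
Qed.

Definition primes_of_weight (n : nat) : seq (seq nat) :=
  map (cons 1) (filter (cut_free 1) (comps (3 * n).-1)).

Lemma mem_primes_of_weight n c :
  c \in primes_of_weight n <-> Mprime c /\ weight c = n.
Proof.
split.
- case/mapP => w; rewrite mem_filter mem_comps => /and3P[Hw Fw /eqP Hs] ->.
  split; first exact/Mprime_cons.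
  have [H3 _] := (cut_freeP 1 w).1 Hw.
  by rewrite /weight /=; lia.
- case=> Pc Hwt; have [w Ec] := Mprime_nonnil Pc; rewrite Ec in Pc Hwt.
  have [Fw Hw] := (Mprime_cons w).1 Pc; have [H3 _] := (cut_freeP 1 w).1 Hw.
  apply/mapP; exists w => //; rewrite mem_filter mem_comps Hw Fw /=.
  by move: Hwt; rewrite /weight /=; lia.
Qed.

Lemma uniq_primes_of_weight n : uniq (primes_of_weight n).
Proof. by rewrite map_inj_uniq ?filter_uniq ?uniq_comps // => ? ? []. Qed.

Lemma size_primes_of_weight n : size (primes_of_weight n) = acoef n.
Proof.
rewrite size_map size_filter; case: n => [//|n].
by have [_ _ <-] := ncut_free_count n; rewrite mulnS.
Qed.

Lemma rec2_unique (k : nat) (f u v : nat -> nat) :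
  u 0 = v 0 -> u 1 = v 1 ->
  (forall n, u n.+2 = f n + k * u n.+1 + u n) ->
  (forall n, v n.+2 = f n + k * v n.+1 + v n) -> u =1 v.
Proof.
move=> E0 E1 Hu Hv n.
suff [] : u n = v n /\ u n.+1 = v n.+1 by [].
by elim: n => [//|n [En En1]]; rewrite Hu Hv En En1.
Qed.

(* F_(3n) satisfies F_(3n+6) = 4 F_(3n+3) + F_(3n), the recurrence of g. *)
Lemma fib_mul3 n : fib (3 * n) = gcoef n.
Proof.
apply: (@rec2_unique 4 (fun=> 0) (fun n => fib (3 * n))) => // m.
rewrite add0n //.
have fibSS k : fib k.+2 = fib k.+1 + fib k by [].
rewrite !mulnS !addSn !add0n !fibSS; lia.
Qed.

(* The n-th coefficient of the product A*C of the series A = 2x/(1-2x-x^2)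
   and C = 1 + sum F_(3n) x^n. *)
Definition conv_ac (n : nat) : nat :=
  \sum_(0 <= k < n.+1) acoef k * ccoef (n - k).

Lemma conv_acSS n :
  conv_ac n.+2 = 2 * ccoef n.+1 + 2 * conv_ac n.+1 + conv_ac n.
Proof.
have acoefSS i : acoef i.+2 = 2 * acoef i.+1 + acoef i by [].
have E1 : conv_ac n.+1 = \sum_(0 <= i < n.+1) acoef i.+1 * ccoef (n - i).
  by rewrite /conv_ac big_nat_recl // mul0n add0n; apply: eq_bigr => i _.
have E2 : conv_ac n.+2 =
    2 * ccoef n.+1 + \sum_(0 <= i < n.+1) acoef i.+2 * ccoef (n - i).
  by rewrite /conv_ac big_nat_recl // big_nat_recl // mul0n add0n.
rewrite E2 E1 /conv_ac -addnA; congr (_ + _).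
under eq_bigr do rewrite acoefSS mulnDl -mulnA.
by rewrite big_split -big_distrr.
Qed.

(* Since C_(n+1) = g_(n+1), A*C satisfies the recurrence of g; hence
   A*C = C - 1, i.e. C = (1 - A)^(-1). *)
Lemma conv_ac_gcoef n : conv_ac n = gcoef n.
Proof.
apply: (@rec2_unique 2 (fun m => 2 * gcoef m.+1)) => {n} [||n|n].
- by rewrite /conv_ac big_nat1.
- by rewrite /conv_ac big_nat_recl // big_nat1.
- by rewrite conv_acSS -fib_mul3.
- by have : gcoef n.+2 = 4 * gcoef n.+1 + gcoef n by []; lia.
Qed.

Theorem mainTheorem19 :
  (* M is a submonoid of the free monoid under concatenation ... *)
  (inM [::] /\ forall u v, inM u -> inM v -> inM (u ++ v)) /\
  (* ... and it is free: every element factors uniquely into primes *)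
  (forall c, inM c -> exists fs : seq (seq nat),
       (forall f, f \in fs -> Mprime f) /\ flatten fs = c) /\
  (forall fs gs : seq (seq nat),
       (forall f, f \in fs -> Mprime f) -> (forall g, g \in gs -> Mprime g) ->
       flatten fs = flatten gs -> fs = gs) /\
  (* the number of primes of M of weight n is a_n *)
  (forall n, exists ps : seq (seq nat),
       [/\ uniq ps,
           (forall c, c \in ps <-> (Mprime c /\ weight c = n)) &
           size ps = acoef n]) /\
  (* 1 + sum F_{3n} x^n = 1 + 2x/(1-4x-x^2) *)
  (forall n, 0 < n -> fib (3 * n) = gcoef n) /\
  (* 1 + sum F_{3n} x^n = (1 - 2x/(1-2x-x^2))^{-1}, i.e. C = 1 + A*C *)
  (forall n, 0 < n -> ccoef n = \sum_(0 <= k < n.+1) acoef k * ccoef (n - k)).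
Proof.
split; first by split; last exact: inM_cat.
split; first exact: factorization_exists.
split; first exact: factorization_unique.
split.
  move=> n; exists (primes_of_weight n); split.
  - exact: uniq_primes_of_weight.
  - exact: mem_primes_of_weight.
  - exact: size_primes_of_weight.
split; first by move=> n _; exact: fib_mul3.
case=> [//|n] _; change (ccoef n.+1 = conv_ac n.+1).
by rewrite conv_ac_gcoef -fib_mul3.
Qed.
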